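(* Let $X$ be a set, $m\ge 1$, and let $\phi_1,\phi_2:X\times X\to\mathbb{C}$ be two functions such that, for $\phi=\phi_1$ and for $\phi=\phi_2$: (i) $\phi(x,y)=-\phi(y,x)$ for all $x,y\in X$; (ii) $\phi(x_1,x_2)\phi(x_3,x_4)-\phi(x_1,x_3)\phi(x_2,x_4)+\phi(x_1,x_4)\phi(x_2,x_3)=0$ for all $x_1,x_2,x_3,x_4\in X$. For $(x_1,\ldots,x_{2m})\in X^{2m}$ with $\phi_2(x_i,x_j)\neq 0$ for all $i\neq j$, define \[ \Delta_{2m}(x_1,\ldots,x_{2m})=\frac{\det_{1\le i\le m,\ m+1\le j\le 2m}\left(\dfrac{\phi_1(x_i,x_j)}{\phi_2(x_i,x_j)}\right)}{\prod_{1\le i<j\le m}\phi_2(x_i,x_j)\ \prod_{m+1\le i<j\le 2m}\phi_2(x_i,x_j)}. \] Then $\Delta_{2m}$ is a symmetric function of all its $2m$ arguments $x_1,\ldots,x_{2m}$ (on this domain).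
   Context: The determinant is of the $m\times m$ matrix with rows indexed by $i=1,\ldots,m$ and columns by $j=m+1,\ldots,2m$. *)

From HB Require Import structures.
From mathcomp Require Import all_boot all_order all_algebra all_fingroup.
Set Implicit Arguments. Unset Strict Implicit. Unset Printing Implicit Defensive.
Import Order.TTheory GRing.Theory Num.Theory.
Local Open Scope ring_scope.

(* Indices 1..2m are represented by 'I_(m + m): the first block
   (lshift m i, i < m) corresponds to x_1..x_m, the second block
   (rshift m j, j < m) corresponds to x_{m+1}..x_{2m}. *)

Definition antisym (C : numClosedFieldType) (X : Type) (phi : X -> X -> C) :=
  forall x y, phi x y = - phi y x.

Definition plucker3 (C : numClosedFieldType) (X : Type) (phi : X -> X -> C) :=
  forall x1 x2 x3 x4,
    phi x1 x2 * phi x3 x4 - phi x1 x3 * phi x2 x4 + phi x1 x4 * phi x2 x3 = 0.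

Definition Delta (C : numClosedFieldType) (X : Type) (phi1 phi2 : X -> X -> C)
    (m : nat) (x : 'I_(m + m) -> X) : C :=
  \det (\matrix_(i < m, j < m)
          (phi1 (x (lshift m i)) (x (rshift m j)) /
           phi2 (x (lshift m i)) (x (rshift m j))))
  / ((\prod_(i < m) \prod_(j < m | (i < j)%N)
         phi2 (x (lshift m i)) (x (lshift m j)))
     * (\prod_(i < m) \prod_(j < m | (i < j)%N)
         phi2 (x (rshift m i)) (x (rshift m j)))).

(* The three-term relation makes both forms of rank two: on the finitely many
   points x_i we have phi1 (x_i, x_j) = c_i d_j - c_j d_i (plucker_rank2),
   while w i j := phi2 (x_i, x_j) is an alternating form which satisfies the
   same relation and does not vanish off the diagonal.  For a set A of points
   of even size, half_sum A is the sum over the halves S of A of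
       prod_(i in S) c_i * prod_(j in A \ S) d_j / prod_(i in S, j in A \ S) w i j,
   which only depends on the set A.  The theorem follows from the identity
       Delta (x_1, ..., x_2m) = (-1)^C(m,2) * half_sum {x_1, ..., x_2m}
   (delta_half_sum), proved by induction on m from three facts about w:
   - lagrange: Lagrange interpolation for the "polynomials" z |-> prod w b z,
     proved by induction from the three-term relation;
   - half_sum_star: the expansion of half_sum along a pivot point p, obtained
     by sorting the halves by whether they contain p and summing the ratios of
     their cross products with lagrange;
   - delta_expand: the Laplace expansion of the determinant along the row of
     p, which matches half_sum_star term by term. *)

From HB Require Import structures.
From mathcomp Require Import all_boot all_order all_algebra all_fingroup.
From mathcomp Require Import ring zify.
Import Order.TTheory GRing.Theory Num.Theory.
Local Open Scope ring_scope.
Set Implicit Arguments. Unset Strict Implicit. Unset Printing Implicit Defensive.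

Lemma setD1C (T : finType) (A : {set T}) (a b : T) : A :\ a :\ b = A :\ b :\ a.
Proof. by apply/setP=> x; rewrite !inE; case: (x == a); case: (x == b). Qed.

Lemma imset_lift (T : finType) k (h : 'I_k.+1 -> T) (j : 'I_k.+1) :
  [set h i | i : 'I_k.+1] = h j |: [set h (lift j b) | b : 'I_k].
Proof.
apply/setP => x; rewrite !inE; apply/imsetP/idP.
  move=> [i _ ->]; case: (unliftP j i) => [b ->|->]; last by rewrite eqxx.
  by apply/orP; right; apply/imsetP; exists b.
by case/orP => [/eqP ->|/imsetP [b _ ->]]; [exists j | exists (lift j b)].
Qed.

Lemma imset_liftD1 (T : finType) k (h : 'I_k.+1 -> T) (j : 'I_k.+1) :
  injective h -> [set h i | i : 'I_k.+1] :\ h j = [set h (lift j b) | b : 'I_k].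
Proof.
move=> hi; rewrite (imset_lift h j) setU1K //; apply/imsetP => -[b _ /hi E].
by move: (neq_lift j b); rewrite -E eqxx.
Qed.

Lemma imset_inj_setT (T : finType) (h : T -> T) :
  injective h -> [set h i | i : T] = setT.
Proof.
by move=> hi; apply/eqP; rewrite eqEcard subsetT cardsT (card_imset _ hi) leqnn.
Qed.

Lemma imset_split (T : finType) m (h : 'I_(m + m) -> T) :
  [set h (lshift m i) | i : 'I_m] :|: [set h (rshift m i) | i : 'I_m] =
  [set h i | i : 'I_(m + m)].
Proof.
apply/setP => y; rewrite !inE; apply/idP/imsetP.
  by case/orP => /imsetP [i _ ->]; eexists.
case=> i _ ->; case: (splitP i) => [a E | b E]; apply/orP.
  by left; apply/imsetP; exists a => //; congr h; apply: val_inj.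
by right; apply/imsetP; exists b => //; congr h; apply: val_inj.
Qed.

Lemma eqn_double (a b : nat) : (a.*2 == b.*2) = (a == b).
Proof. by rewrite -!muln2 eqn_pmul2r. Qed.

Lemma sum_setU1 (T : finType) (R : nmodType) (a : T) (Pr : {set T} -> bool)
    (G : {set T} -> R) :
  \sum_(S | Pr S && (a \in S)) G S = \sum_(S | Pr (a |: S) && (a \notin S)) G (a |: S).
Proof.
rewrite (reindex_onto (fun S => a |: S) (fun S => S :\ a)) => [|S /andP [_ aS]];
  last by rewrite setD1K.
apply: eq_bigl => S; rewrite in_setU1 eqxx /= andbT; congr (_ && _).
by apply/eqP/idP => [<- | aS]; [rewrite !inE eqxx | exact: setU1K].
Qed.

Lemma plucker_rank2 (K : fieldType) (I : finType) (v : I -> I -> K) :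
  (forall i j k l, v i j * v k l - v i k * v j l + v i l * v j k = 0) ->
  exists c d : I -> K, forall i j, v i j = c i * d j - c j * d i.
Proof.
move=> vP; case: (boolP [exists u, exists t, v u t != 0]); last first.
  move/existsPn=> v0; exists (fun=> 0), (fun=> 0) => i j; rewrite !mulr0 subr0.
  by apply/eqP; move/existsPn: (v0 i) => /(_ j); rewrite negbK.
case/existsP=> u /existsP [t vut].
exists (fun i => v u i / v u t), (v t) => i j; apply: (mulfI vut).
have -> : v u t * v i j = v u i * v t j - v u j * v t i.
  by rewrite -(subr0 (v u t * v i j)) -(vP u t i j); ring.
by field.
Qed.

(* In characteristic zero an antisymmetric form vanishes on the diagonal. *)
Lemma antisym_diag0 (C : numClosedFieldType) (X : Type) (phi : X -> X -> C) :
  antisym phi -> forall x, phi x x = 0.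
Proof.
move=> phiA x; apply/eqP; have /eqP := phiA x x.
by rewrite -addr_eq0 -mulr2n mulrn_eq0.
Qed.

Section AlternatingForm.
Variables (K : fieldType) (I : finType) (w : I -> I -> K).
Hypothesis wA : forall i j, w i j = - w j i.
Hypothesis w0 : forall i, w i i = 0.
Hypothesis wP : forall i j k l, w i j * w k l - w i k * w j l + w i l * w j k = 0.
Hypothesis wnz : forall i j, i != j -> w i j != 0.

Lemma plucker_solve b r z p : w r p != 0 ->
  w b z = (w b r * w z p + w b p * w r z) / w r p.
Proof.
move=> nz; apply: (canRL (mulfK nz)).
by rewrite -(addr0 (w b z * w r p)) -(wP b r z p); ring.
Qed.

(* Lagrange interpolation at n + 1 nodes R of the "degree n polynomial"
   z |-> prod_(b in B) w b z, evaluated at a point p outside the nodes; the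
   ratios w y p / w y z play the role of (p - y) / (z - y). *)
Definition lagrange_at (n : nat) := forall (R B : {set I}) p,
  p \notin R -> #|R| = n.+1 -> #|B| = n ->
  \sum_(z in R) (\prod_(b in B) w b z) * \prod_(y in R :\ z) (w y p / w y z)
  = \prod_(b in B) w b p.

Lemma lagrange_at0 : lagrange_at 0.
Proof.
move=> R B p _ cR cB; have -> : B = set0 by apply/eqP; rewrite -cards_eq0 cB.
have /cards1P [r ->] : #|R| == 1%N by rewrite cR.
by rewrite big_set1 setDv !big_set0 mulr1.
Qed.

(* The vanishing of the top coefficient: a polynomial of degree n has zero
   divided difference on n + 2 nodes. *)
Lemma divided_difference0 n : lagrange_at n -> forall R B : {set I},
  #|R| = n.+2 -> #|B| = n ->
  \sum_(z in R) (\prod_(b in B) w b z) / \prod_(y in R :\ z) w y z = 0.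
Proof.
move=> IH R B cR cB.
have [r rR] : exists r, r \in R by apply/set0Pn; rewrite -card_gt0 cR.
have cR' : #|R :\ r| = n.+1 by move: cR; rewrite (cardsD1 r) rR => -[].
have Kr : \prod_(y in R :\ r) w y r != 0.
  by apply/prodf_neq0 => y; rewrite !inE => /andP [yr _]; apply: wnz.
have := IH (R :\ r) B r; rewrite !inE eqxx => /(_ isT cR' cB) Hr.
apply: (mulIf Kr); rewrite mul0r (big_setD1 r rR) /= mulrDl divfK //.
rewrite -Hr mulr_suml -big_split /= big1 // => z; rewrite !inE => /andP [zr zR].
rewrite [X in _ / X](big_setD1 r); last by rewrite !inE rR andbT eq_sym.
rewrite (setD1C R z r) [\prod_(y in R :\ r) w y r](big_setD1 z); last by rewrite !inE zr zR.
have wrz : w r z != 0 by apply: wnz; rewrite eq_sym.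
have Qz : \prod_(y in R :\ r :\ z) w y z != 0.
  by apply/prodf_neq0 => y; rewrite !inE => /andP [yz _]; apply: wnz.
by rewrite prodf_div (wA z r) /=; field; rewrite wrz Qz.
Qed.

(* Induction step: expand one factor w b z of the interpolated product with
   the three-term relation around a node r. *)
Lemma lagrange_step n : lagrange_at n -> lagrange_at n.+1.
Proof.
move=> IH R B p pR cR cB.
have [b bB] : exists b, b \in B by apply/set0Pn; rewrite -card_gt0 cB.
have [r rR] : exists r, r \in R by apply/set0Pn; rewrite -card_gt0 cR.
have cB' : #|B :\ b| = n by move: cB; rewrite (cardsD1 b) bB => -[].
have wrp : w r p != 0 by apply: wnz; apply: contraNneq pR => <-.
set g := fun z => \prod_(b0 in B :\ b) w b0 z.
set Pi := fun z => \prod_(y in R :\ z) (w y p / w y z).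
have at_r : \sum_(z in R) g z * w r z * Pi z = w r p * g p.
  rewrite (big_setD1 r rR) /= w0 mulr0 mul0r add0r.
  rewrite {2}/g -(IH (R :\ r) (B :\ b) p) //; last 2 first.
  - by rewrite !inE negb_and pR orbT.
  - by move: cR; rewrite (cardsD1 r) rR => -[].
  rewrite mulr_sumr; apply: eq_bigr => z; rewrite !inE => /andP [zr zR].
  rewrite /Pi (big_setD1 r); last by rewrite !inE eq_sym zr rR.
  have wrz : w r z != 0 by apply: wnz; rewrite eq_sym.
  by rewrite setD1C /= /g; field.
have at_p : \sum_(z in R) g z * w z p * Pi z = 0.
  transitivity ((\prod_(y in R) w y p) *
      \sum_(z in R) g z / \prod_(y in R :\ z) w y z); last first.
    by rewrite (divided_difference0 IH) ?mulr0.
  rewrite mulr_sumr; apply: eq_bigr => z zR.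
  by rewrite /Pi (big_setD1 z zR) prodf_div /=; ring.
transitivity (\sum_(z in R) ((w b r / w r p) * (g z * w z p * Pi z)
   + (w b p / w r p) * (g z * w r z * Pi z))).
  by apply: eq_bigr => z zR; rewrite (big_setD1 b bB) (plucker_solve b z wrp) /Pi /g /=; ring.
rewrite big_split /= -!mulr_sumr at_p at_r mulr0 add0r (big_setD1 b bB) /g /=.
by field.
Qed.

Lemma lagrange n : lagrange_at n.
Proof. by elim: n => [|n]; [exact: lagrange_at0 | exact: lagrange_step]. Qed.

Variables (c d : I -> K).

Definition cross (S T : {set I}) := \prod_(i in S) \prod_(j in T) w i j.

(* The contribution of a half S of A, and the sum over all halves of A.
   half_sum A depends only on the set A: this is the symmetry we are after. *)
Definition half_term (S A : {set I}) :=
  (\prod_(i in S) c i) * (\prod_(j in A :\: S) d j) / cross S (A :\: S).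

Definition half_sum (A : {set I}) :=
  \sum_(S : {set I} | (S \subset A) && (#|S|.*2 == #|A|)) half_term S A.

Lemma half_sum0 : half_sum set0 = 1.
Proof.
rewrite /half_sum (big_pred1 set0); last first.
  by move=> S; rewrite subset0 cards0 /=; case: (eqVneq S set0) => [->|]; rewrite ?cards0 ?andbF.
by rewrite /half_term /cross setD0 !big_set0 mulr1 invr1 mulr1.
Qed.

Lemma cross_neq0 (S S' T : {set I}) : S' \subset S -> T \subset ~: S ->
  cross S' T != 0.
Proof.
move=> sS' sT; apply/prodf_neq0 => i iS'; apply/prodf_neq0 => j jT; apply: wnz.
by apply: contraTneq (subsetP sT j jT) => <-; rewrite inE negbK (subsetP sS').
Qed.

Lemma cross_peel (S T : {set I}) a z : a \in S -> z \in T ->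
  cross S T = \prod_(j in T :\ z) w a j * \prod_(i in S :\ a) w i z
              * cross (S :\ a) (T :\ z) * w a z.
Proof.
move=> aS zT; rewrite /cross (big_setD1 a aS) /= (big_setD1 z zT) /=.
rewrite [\prod_(i in S :\ a) _](eq_bigr (fun i => w i z * \prod_(j in T :\ z) w i j)).
  by rewrite big_split /=; ring.
by move=> i _; rewrite (big_setD1 z zT).
Qed.

Lemma prod_in_mkcond (X : {set I}) (f : I -> K) :
  \prod_(j in X) f j = \prod_j (if j \in X then f j else 1).
Proof. exact: big_mkcond. Qed.

Section StarExpansion.
Variables (n : nat) (p : I) (P Q : {set I}).
Hypotheses (pP : p \notin P) (pQ : p \notin Q) (dPQ : [disjoint P & Q])
  (cP : #|P| = n) (cQ : #|Q| = n.+1).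

(* The 2n + 2 points: a pivot p, n points P and n + 1 points Q; this is the
   shape of the index set when expanding the determinant along a row. *)
Definition star_set := p |: (P :|: Q).

(* The weight of the point z of Q in the expansion of half_sum star_set. *)
Definition star_weight z :=
  w p z * \prod_(y in P) w y p * \prod_(y in Q :\ z) w z y.

Lemma notin_PQ j : (j \in P) && (j \in Q) = false.
Proof. by apply/negbTE/andP => -[jP jQ]; rewrite (disjointFr dPQ jP) in jQ. Qed.

Lemma star_weight_neq0 z : z \in Q -> star_weight z != 0.
Proof.
move=> zQ; rewrite /star_weight !mulf_neq0 //.
- by apply: wnz; apply: contraNneq pQ => ->.
- by apply/prodf_neq0 => y yP; apply: wnz; apply: contraNneq pP => <-.
- by apply/prodf_neq0 => y; rewrite !inE => /andP [yz _]; apply: wnz; rewrite eq_sym.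
Qed.

Lemma card_half_split (S : {set I}) : S \subset star_set -> #|S| = n.+1 ->
  (#|P :&: S| + #|Q :&: S| = n + (p \notin S))%N.
Proof.
move=> SA cS; have := cardsD1 p S; rewrite cS.
have -> : #|S :\ p| = #|P :&: S| + #|Q :&: S|.
  rewrite -(cardsID P (S :\ p)).
  have -> : (S :\ p) :&: P = P :&: S.
    apply/setP => j; rewrite !inE.
    by case: (eqVneq j p) => [->|]; rewrite ?(negbTE pP) ?andbF //= andbC.
  congr (_ + _); apply: eq_card => j; rewrite !inE.
  case: (eqVneq j p) => [->|jp] /=; first by rewrite (negbTE pQ) andbF.
  case Sj: (j \in S); rewrite ?andbF //= ?andbT.
  move: (subsetP SA j Sj) (notin_PQ j); rewrite !inE (negbTE jp) /=.
  by case: (j \in P); case: (j \in Q).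
by case: (p \in S) => /=; lia.
Qed.

Lemma cross_ratio_with_pivot (S : {set I}) z : p \in S -> z \in Q -> z \notin S ->
  cross S (star_set :\: S) /
    (star_weight z * cross (S :\ p) (star_set :\: S :\ z)) =
  \prod_(j in star_set :\: S :\ z) w p j * \prod_(i in S :\ p) w i z /
    (\prod_(y in P) w y p * \prod_(y in Q :\ z) w z y).
Proof.
move=> pS zQ zS; set T := star_set :\: S.
have zT : z \in T by rewrite !inE zS zQ !orbT.
have cross0 : cross (S :\ p) (T :\ z) != 0.
  by apply: (cross_neq0 (subD1set S p)); apply: subset_trans (subD1set _ _) (subsetDr _ _).
have wpz : w p z != 0 by apply: wnz; apply: contraNneq pQ => ->.
have := star_weight_neq0 zQ; rewrite /star_weight !mulf_eq0 !negb_or.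
case/andP => [/andP [_ wP0] wQ0].
by rewrite (cross_peel pS zT); field; rewrite cross0 wpz wP0 wQ0.
Qed.

Lemma cross_ratio_without_pivot (S : {set I}) z : p \notin S -> z \in Q -> z \in S ->
  cross S (star_set :\: S) /
    (star_weight z * cross (S :\ z) (star_set :\: S :\ p)) =
  - (\prod_(j in star_set :\: S :\ p) w z j * \prod_(i in S :\ z) w i p /
    (\prod_(y in P) w y p * \prod_(y in Q :\ z) w z y)).
Proof.
move=> pS zQ zS; set T := star_set :\: S.
have pT : p \in T by rewrite !inE pS eqxx.
have cross0 : cross (S :\ z) (T :\ p) != 0.
  by apply: (cross_neq0 (subD1set S z)); apply: subset_trans (subD1set _ _) (subsetDr _ _).
have wpz : w p z != 0 by apply: wnz; apply: contraNneq pQ => ->.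
have := star_weight_neq0 zQ; rewrite /star_weight !mulf_eq0 !negb_or.
case/andP => [/andP [_ wP0] wQ0].
by rewrite (cross_peel zS pT) (wA z p); field; rewrite cross0 wpz wP0 wQ0.
Qed.

(* For a half S containing p and z in Q \ S, the ratio of the cross product
   of S and of the half S \ p of star_set \ {p, z} is, up to the weight of z,
   the Lagrange summand for the nodes Q \ S and the polynomial
   prod_(b in P :&: S) w b _. *)
Lemma ratio_with_pivot (S : {set I}) z :
  S \subset star_set -> p \in S -> #|S| = n.+1 -> z \in Q -> z \notin S ->
  cross S (star_set :\: S) /
    (star_weight z * cross (S :\ p) (star_set :\: S :\ z)) =
  \prod_(b in P :&: S) w b z * \prod_(y in Q :\: S :\ z) (w y p / w y z)
    / \prod_(b in P :&: S) w b p.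
Proof.
move=> SA pS cS zQ zS; rewrite cross_ratio_with_pivot //.
have zp : z != p by apply: contraNneq pQ => <-.
have sign : #|P :\: S| = #|Q :&: S|.
  by apply/(@addnI #|P :&: S|); rewrite cardsID cP card_half_split // pS addn0.
transitivity (\prod_(j in P :\: S) (-1) * \prod_(j in Q :&: S) (-1) *
  (\prod_(b in P :&: S) w b z * \prod_(y in Q :\: S :\ z) (w y p / w y z)
     / \prod_(b in P :&: S) w b p)); last first.
  by rewrite !prodr_const sign -exprMn mulrN1 opprK expr1n mul1r.
rewrite !prod_in_mkcond -!big_split -!prodf_div -!big_split /=.
apply: eq_bigr => j _; rewrite /star_set !inE.
have zP : (z \in P) = false by exact: (disjointFl dPQ zQ).
case: (eqVneq j p) => [->|jp].
  by rewrite ?eqxx (negbTE pP) (negbTE pQ) pS eq_sym (negbTE zp) /= !(mul1r, mulr1, invr1).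
case: (eqVneq j z) => [->|jz].
  by rewrite ?eqxx zP zQ (negbTE zS) ?(negbTE zp) /= !(mul1r, mulr1, invr1).
have wjp : w j p != 0 by exact: wnz.
have wjz : w j z != 0 by exact: wnz.
rewrite (wA p j) (wA z j).
have SA_j : j \in S -> (j \in P) || (j \in Q).
  by move/(subsetP SA); rewrite !inE (negbTE jp).
case Pj: (j \in P); case Qj: (j \in Q); case Sj: (j \in S);
  move: (notin_PQ j) SA_j; rewrite Pj Qj Sj //= => _ SA_j.
all: try by move: (SA_j isT).
all: by field; rewrite ?oppr_eq0 ?wjp ?wjz ?oner_neq0.
Qed.

Lemma ratio_without_pivot (S : {set I}) z :
  S \subset star_set -> p \notin S -> #|S| = n.+1 -> z \in Q -> z \in S ->
  cross S (star_set :\: S) /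
    (star_weight z * cross (S :\ z) (star_set :\: S :\ p)) =
  - (\prod_(b in P :\: S) w b z * \prod_(y in Q :&: S :\ z) (w y p / w y z)
     / \prod_(b in P :\: S) w b p).
Proof.
move=> SA pS cS zQ zS; rewrite cross_ratio_without_pivot //; congr (- _).
have zp : z != p by apply: contraNneq pQ => <-.
have sign : #|P :\: S| = #|Q :&: S :\ z|.
  have := cardsD1 z (Q :&: S); rewrite !inE zQ zS /= add1n => eQ.
  apply: (@addnI #|P :&: S|); apply: eq_add_S.
  by rewrite cardsID cP -addnS -eQ card_half_split // pS /= addn1.
transitivity (\prod_(j in P :\: S) (-1) * \prod_(j in Q :&: S :\ z) (-1) *
  (\prod_(b in P :\: S) w b z * \prod_(y in Q :&: S :\ z) (w y p / w y z)
     / \prod_(b in P :\: S) w b p)); last first.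
  by rewrite !prodr_const sign -exprMn mulrN1 opprK expr1n mul1r.
rewrite !prod_in_mkcond -!big_split -!prodf_div -!big_split /=.
apply: eq_bigr => j _; rewrite /star_set !inE.
have zP : (z \in P) = false by exact: (disjointFl dPQ zQ).
case: (eqVneq j p) => [->|jp].
  by rewrite ?eqxx (negbTE pP) (negbTE pQ) (negbTE pS) eq_sym ?(negbTE zp) /= !(mul1r, mulr1, invr1).
case: (eqVneq j z) => [->|jz].
  by rewrite ?eqxx zP zQ zS ?(negbTE zp) /= !(mul1r, mulr1, invr1).
have wjp : w j p != 0 by exact: wnz.
have wjz : w j z != 0 by exact: wnz.
rewrite (wA z j).
have SA_j : j \in S -> (j \in P) || (j \in Q).
  by move/(subsetP SA); rewrite !inE (negbTE jp).
case Pj: (j \in P); case Qj: (j \in Q); case Sj: (j \in S);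
  move: (notin_PQ j) SA_j; rewrite Pj Qj Sj //= => _ SA_j.
all: try by move: (SA_j isT).
all: by field; rewrite ?oppr_eq0 ?wjp ?wjz ?oner_neq0.
Qed.

(* Expansion of the term of a half S containing p, as a combination of terms
   of halves of the smaller sets star_set \ {p, z}: the ratios of cross
   products sum to 1 by Lagrange interpolation. *)
Lemma half_term_with_pivot (S : {set I}) :
  S \subset star_set -> p \in S -> #|S| = n.+1 ->
  half_term S star_set = \sum_(z in Q :\: S)
    c p * d z / star_weight z * half_term (S :\ p) (star_set :\ p :\ z).
Proof.
move=> SA pS cS.
have cQS : #|Q :\: S| = (#|P :&: S|).+1.
  apply: (@addnI #|Q :&: S|).
  by rewrite cardsID cQ addnS addnC card_half_split // pS addn0.
set T := star_set :\: S.
have cross0 : cross S T != 0 by apply: cross_neq0 (subxx S) (subsetDr _ _).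
have term z : z \in Q :\: S ->
    c p * d z / star_weight z * half_term (S :\ p) (star_set :\ p :\ z) =
    half_term S star_set *
      (cross S T / (star_weight z * cross (S :\ p) (T :\ z))).
  rewrite inE => /andP [zS zQ].
  have zT : z \in T by rewrite !inE zS zQ !orbT.
  have E : star_set :\ p :\ z :\: (S :\ p) = T :\ z.
    apply/setP => x; rewrite !inE; case: (eqVneq x p) => [->|xp] /=.
      by rewrite pS /= !andbF.
    by rewrite andbCA.
  have Dz := star_weight_neq0 zQ.
  have cross0' : cross (S :\ p) (T :\ z) != 0.
    by apply: (cross_neq0 (subD1set S p)); apply: subset_trans (subD1set _ _) (subsetDr _ _).
  rewrite /half_term E -/T (big_setD1 p pS) (big_setD1 z zT) /=.
  by field; rewrite cross0 Dz cross0'.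
rewrite (eq_bigr _ term) -mulr_sumr -[LHS]mulr1; congr (_ * _).
have Pp : \prod_(b in P :&: S) w b p != 0.
  by apply/prodf_neq0 => b; rewrite inE => /andP [bP _]; apply: wnz; apply: contraNneq pP => <-.
rewrite (eq_bigr (fun z => \prod_(b in P :&: S) w b z *
    \prod_(y in Q :\: S :\ z) (w y p / w y z) / \prod_(b in P :&: S) w b p)); last first.
  by move=> z; rewrite inE => /andP [zS zQ]; exact: ratio_with_pivot.
rewrite -mulr_suml (@lagrange #|P :&: S|) ?divff //.
by rewrite !inE negb_and pQ orbT.
Qed.

Lemma half_term_without_pivot (S : {set I}) :
  S \subset star_set -> p \notin S -> #|S| = n.+1 ->
  half_term S star_set = - \sum_(z in Q :&: S)
    c z * d p / star_weight z * half_term (S :\ z) (star_set :\ p :\ z).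
Proof.
move=> SA pS cS.
have cQS : #|Q :&: S| = (#|P :\: S|).+1.
  apply: (@addnI #|P :&: S|).
  by rewrite card_half_split // pS /= addn1 addnS cardsID cP.
set T := star_set :\: S.
have cross0 : cross S T != 0 by apply: cross_neq0 (subxx S) (subsetDr _ _).
have pT : p \in T by rewrite !inE pS eqxx.
have term z : z \in Q :&: S ->
    c z * d p / star_weight z * half_term (S :\ z) (star_set :\ p :\ z) =
    half_term S star_set *
      (cross S T / (star_weight z * cross (S :\ z) (T :\ p))).
  rewrite inE => /andP [zQ zS].
  have E : star_set :\ p :\ z :\: (S :\ z) = T :\ p.
    apply/setP => x; rewrite !inE; case: (eqVneq x z) => [->|xz] /=.
      by rewrite zS /= !andbF.
    by rewrite andbCA.
  have Dz := star_weight_neq0 zQ.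
  have cross0' : cross (S :\ z) (T :\ p) != 0.
    by apply: (cross_neq0 (subD1set S z)); apply: subset_trans (subD1set _ _) (subsetDr _ _).
  rewrite /half_term E -/T (big_setD1 z zS) (big_setD1 p pT) /=.
  by field; rewrite cross0 Dz cross0'.
rewrite (eq_bigr _ term) -mulr_sumr -[LHS]mulr1 -mulrN; congr (_ * _).
have Pp : \prod_(b in P :\: S) w b p != 0.
  by apply/prodf_neq0 => b; rewrite inE => /andP [_ bP]; apply: wnz; apply: contraNneq pP => <-.
rewrite (eq_bigr (fun z => - (\prod_(b in P :\: S) w b z *
    \prod_(y in Q :&: S :\ z) (w y p / w y z) / \prod_(b in P :\: S) w b p))); last first.
  by move=> z; rewrite inE => /andP [zQ zS]; exact: ratio_without_pivot.
rewrite sumrN -mulr_suml (@lagrange #|P :\: S|) ?divff ?opprK //.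
by rewrite !inE negb_and pQ.
Qed.

Lemma star_setD z : z \in Q -> star_set :\ p :\ z = P :|: (Q :\ z).
Proof.
move=> zQ; rewrite /star_set setU1K ?inE ?negb_or ?pP ?pQ // setDUl.
congr (_ :|: _); apply/setP => y; rewrite !inE.
by case: (eqVneq y z) => [->|] //=; rewrite (disjointFl dPQ zQ).
Qed.

Lemma card_star_set : #|star_set| = (n.+1).*2.
Proof.
rewrite /star_set cardsU1 !inE negb_or pP pQ cardsU.
have -> : P :&: Q = set0 by apply/eqP; rewrite setI_eq0.
by rewrite cards0 cP cQ /= -addnn; lia.
Qed.

Lemma card_star_setD z : z \in Q -> #|star_set :\ p :\ z| = n.*2.
Proof.
move=> zQ; have pA : p \in star_set by rewrite !inE eqxx.
have zAp : z \in star_set :\ p by rewrite !inE zQ !orbT andbT; apply: contraNneq pQ => <-.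
have := cardsD1 p star_set.
rewrite pA card_star_set doubleS (cardsD1 z (star_set :\ p)) zAp !add1n.
by case=> ->.
Qed.

Lemma halves_with_pivot z (S : {set I}) : z \in Q ->
  [&& p |: S \subset star_set, #|p |: S|.*2 == #|star_set|, p \notin S
    & z \in Q :\: (p |: S)]
  = (S \subset star_set :\ p :\ z) && (#|S|.*2 == #|star_set :\ p :\ z|).
Proof.
move=> zQ; have zp : z != p by apply: contraNneq pQ => <-.
have pA : p \in star_set by rewrite !inE eqxx.
rewrite card_star_set card_star_setD // !subsetD1 subUset sub1set pA cardsU1.
rewrite !inE zQ (negbTE zp) /=.
case pS: (p \in S); rewrite /= ?andbF //=.
rewrite add1n eqn_double eqSS eqn_double.
by case: (S \subset star_set); case: (z \in S); case: (#|S| == n).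
Qed.

Lemma halves_without_pivot z (S : {set I}) : z \in Q ->
  [&& z |: S \subset star_set, #|z |: S|.*2 == #|star_set|, p \notin z |: S,
    z \notin S & z \in Q :&: (z |: S)]
  = (S \subset star_set :\ p :\ z) && (#|S|.*2 == #|star_set :\ p :\ z|).
Proof.
move=> zQ; have zp : z != p by apply: contraNneq pQ => <-.
have zA : z \in star_set by rewrite !inE zQ !orbT.
rewrite card_star_set card_star_setD // !subsetD1 subUset sub1set zA cardsU1.
rewrite !inE zQ eqxx /= andbT (eq_sym p z) (negbTE zp) /=.
case zS: (z \in S); rewrite /= ?andbF //=.
rewrite add1n eqn_double eqSS eqn_double.
by case: (S \subset star_set); case: (p \in S); case: (#|S| == n).
Qed.

Lemma card_half (S : {set I}) : #|S|.*2 == #|star_set| -> #|S| = n.+1.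
Proof. by rewrite card_star_set eqn_double => /eqP. Qed.

Lemma sum_halves_with_pivot :
  \sum_(S : {set I} | (S \subset star_set) && (#|S|.*2 == #|star_set|) &&
      (p \in S))
    half_term S star_set =
  \sum_(z in Q) c p * d z / star_weight z * half_sum (star_set :\ p :\ z).
Proof.
transitivity (\sum_(S : {set I} | (S \subset star_set) &&
     (#|S|.*2 == #|star_set|) && (p \in S))
   \sum_(z in Q :\: S) c p * d z / star_weight z *
     half_term (S :\ p) (star_set :\ p :\ z)).
  apply: eq_bigr => S /andP [/andP [SA cS] pS].
  by apply: half_term_with_pivot => //; exact: card_half.
rewrite sum_setU1.
under eq_bigr => S /andP [_ pS] do rewrite setU1K //.
rewrite (exchange_big_dep (fun z => z \in Q)) /=; last first.
  by move=> S z _; rewrite inE => /andP [].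
apply: eq_bigr => z zQ; rewrite /half_sum mulr_sumr; apply: eq_bigl => S.
by rewrite -halves_with_pivot // !andbA.
Qed.

Lemma sum_halves_without_pivot :
  \sum_(S : {set I} | (S \subset star_set) && (#|S|.*2 == #|star_set|) &&
      (p \notin S))
    half_term S star_set =
  - \sum_(z in Q) c z * d p / star_weight z * half_sum (star_set :\ p :\ z).
Proof.
transitivity (\sum_(S : {set I} | (S \subset star_set) &&
     (#|S|.*2 == #|star_set|) && (p \notin S))
   - \sum_(z in Q :&: S) c z * d p / star_weight z *
       half_term (S :\ z) (star_set :\ p :\ z)).
  apply: eq_bigr => S /andP [/andP [SA cS] pS].
  by apply: half_term_without_pivot => //; exact: card_half.
rewrite sumrN; congr (- _).
rewrite (exchange_big_dep (fun z => z \in Q)) /=; last first.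
  by move=> S z _; rewrite inE => /andP [].
apply: eq_bigr => z zQ; rewrite /half_sum mulr_sumr.
rewrite (eq_bigl (fun S : {set I} => ((S \subset star_set) &&
    (#|S|.*2 == #|star_set|) && (p \notin S) && (z \in Q :&: S)) && (z \in S)));
  last by move=> S; rewrite /= !inE; case: (z \in S); rewrite ?andbF ?andbT.
rewrite sum_setU1.
under eq_bigr => S /andP [_ zS] do rewrite setU1K //.
apply: eq_bigl => S.
by rewrite -(halves_without_pivot S zQ) -!andbA; congr [&& _, _, _ & _]; rewrite andbC.
Qed.

(* The expansion of half_sum star_set along the pivot p; it mirrors the
   Laplace expansion of a determinant along a row. *)
Lemma half_sum_star : half_sum star_set = \sum_(z in Q)
  (c p * d z - c z * d p) / star_weight z * half_sum (star_set :\ p :\ z).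
Proof.
rewrite {1}/half_sum (bigID (fun S : {set I} => p \in S)) /=.
rewrite sum_halves_with_pivot sum_halves_without_pivot -sumrB.
by apply: eq_bigr => z _; rewrite !mulrBl.
Qed.

End StarExpansion.

(* The product of w over the pairs i < j of a family of m points; these are
   the denominators of Delta. *)
Definition vdm m (f : 'I_m -> I) :=
  \prod_(i < m) \prod_(j < m | (i < j)%N) w (f i) (f j).

Lemma vdm_neq0 m (f : 'I_m -> I) : injective f -> vdm f != 0.
Proof.
move=> fi; apply/prodf_neq0 => i _; apply/prodf_neq0 => j ij; apply: wnz.
by apply: contraTneq ij => /fi ->; rewrite ltnn.
Qed.

Lemma prod_lift_neq0 k (h : 'I_k.+1 -> I) (j : 'I_k.+1) : injective h ->
  \prod_(a < k) w (h j) (h (lift j a)) != 0.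
Proof.
move=> hi; apply/prodf_neq0 => a _; apply: wnz; apply/eqP => /hi E.
by move: (neq_lift j a); rewrite -E eqxx.
Qed.

Lemma vdm_lift k (f : 'I_k.+1 -> I) (j : 'I_k.+1) :
  vdm f = vdm (fun a => f (lift j a)) *
          ((-1) ^+ j * \prod_(a < k) w (f j) (f (lift j a))).
Proof.
rewrite /vdm (bigD1_ord j) //=.
rewrite (big_mkcond (fun b : 'I_k.+1 => (j < b)%N)) (bigD1_ord j) //= ltnn mul1r.
under [X in _ * X = _]eq_bigr => a _ do rewrite big_mkcond (bigD1_ord j) //=.
rewrite big_split /=.
under [X in _ * (_ * X) = _]eq_bigr => a _ do
  under eq_bigr => b _ do rewrite !ltnNge leq_bump2 -ltnNge.
under [X in _ * (_ * X) = _]eq_bigr => a _ do rewrite -big_mkcond.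
rewrite mulrA [LHS]mulrC; congr (_ * _).
have -> : (-1) ^+ j = \prod_(a < k) (if (a < j)%N then -1 else 1) :> K.
  rewrite -big_mkcond (big_ord_narrow (n1 := j) (n2 := k) (ltn_ord j)).
  by rewrite prodr_const card_ord.
rewrite -!big_split /=; apply: eq_bigr => a _.
rewrite /= /bump; case: (leqP j a) => ja /=.
  by rewrite ifT ?ifF ?mulr1 ?mul1r //; lia.
by rewrite ifF ?ifT ?mul1r ?(wA (f (lift j a))) ?mulN1r //; lia.
Qed.

(* The matrix of Delta, once phi1 is written c i * d j - c j * d i, and its
   determinant normalized by the two products vdm. *)
Definition delta_mx m (f g : 'I_m -> I) : 'M[K]_m :=
  \matrix_(i, j) ((c (f i) * d (g j) - c (g j) * d (f i)) / w (f i) (g j)).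

Definition delta m (f g : 'I_m -> I) := \det (delta_mx f g) / (vdm f * vdm g).

Lemma delta0 (f g : 'I_0 -> I) : delta f g = 1.
Proof. by rewrite /delta det_mx00 /vdm !big_ord0 mulr1 divr1. Qed.

Lemma delta_expand k (f g : 'I_k.+1 -> I) :
  injective f -> injective g -> (forall a b, f a != g b) ->
  delta f g = \sum_j
    (c (f ord_max) * d (g j) - c (g j) * d (f ord_max)) / w (f ord_max) (g j)
    / (\prod_(a < k) w (f ord_max) (f (lift ord_max a)) *
       \prod_(b < k) w (g j) (g (lift j b)))
    * delta (fun a => f (lift ord_max a)) (fun b => g (lift j b)).
Proof.
move=> fi gi fg; rewrite /delta (expand_det_row _ ord_max) mulr_suml.
rewrite (vdm_lift f ord_max); apply: eq_bigr => j _; rewrite (vdm_lift g j).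
have wfg : w (f ord_max) (g j) != 0 by exact: wnz.
have Vf' : vdm (fun a : 'I_k => f (lift ord_max a)) != 0 by apply: vdm_neq0 => a b /fi /lift_inj.
have Vg' : vdm (fun b : 'I_k => g (lift j b)) != 0 by apply: vdm_neq0 => a b /gi /lift_inj.
have Pf := prod_lift_neq0 ord_max fi; have Pg := prod_lift_neq0 j gi.
have -> : cofactor (delta_mx f g) ord_max j =
    (-1) ^+ (k + j) *
    \det (delta_mx (fun a => f (lift ord_max a)) (fun b => g (lift j b))).
  by rewrite /cofactor; congr (_ * \det _); apply/matrixP => a b; rewrite !mxE.
rewrite mxE exprD /=.
by field; rewrite Pg Pf Vg' Vf' wfg !signr_eq0.
Qed.

Lemma star_weight_imset k (f g : 'I_k.+1 -> I) (j : 'I_k.+1) :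
  injective f -> injective g ->
  star_weight (f ord_max) [set f (lift ord_max a) | a : 'I_k]
    [set g i | i : 'I_k.+1] (g j) =
  w (f ord_max) (g j) *
  ((-1) ^+ k * \prod_(a < k) w (f ord_max) (f (lift ord_max a))) *
  \prod_(b < k) w (g j) (g (lift j b)).
Proof.
move=> fi gi; rewrite /star_weight (imset_liftD1 j gi) !big_imset /=; last 2 first.
- by move=> a b _ _ /gi /lift_inj.
- by move=> a b _ _ /fi /lift_inj.
congr (_ * _ * _); under eq_bigr do rewrite wA.
by rewrite prodrN cardT size_enum_ord.
Qed.

(* The normalized determinant is, up to sign, the half_sum of all its points;
   in particular it only depends on the set of these points. *)
Lemma delta_half_sum m : forall f g : 'I_m -> I,
  injective f -> injective g -> (forall i j, f i != g j) ->
  delta f g = (-1) ^+ 'C(m, 2) *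
              half_sum ([set f i | i : 'I_m] :|: [set g i | i : 'I_m]).
Proof.
elim: m => [|k IH] f g fi gi fg.
  rewrite delta0; have -> : [set f i | i : 'I_0] :|: [set g i | i : 'I_0] = set0.
    by apply/setP => x; rewrite !inE; apply/negbTE/orP => -[] /imsetP [[]].
  by rewrite half_sum0 mulr1.
pose p := f ord_max; pose f' := fun a => f (lift ord_max a).
pose P := [set f' a | a : 'I_k]; pose Q := [set g i | i : 'I_k.+1].
have f'i : injective f' by move=> a b /fi /lift_inj.
have pP : p \notin P.
  by apply/imsetP => -[a _ /fi E]; move: (neq_lift ord_max a); rewrite -E eqxx.
have pQ : p \notin Q by apply/imsetP => -[i _ E]; move: (fg ord_max i); rewrite -E eqxx.
have dPQ : [disjoint P & Q].
  rewrite -setI_eq0; apply/eqP/setP => x; rewrite !inE; apply/negbTE/andP.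
  case=> /imsetP [a _ ->] /imsetP [i _ E].
  by move: (fg (lift ord_max a) i); rewrite -E eqxx.
have cP : #|P| = k by rewrite card_imset // card_ord.
have cQ : #|Q| = k.+1 by rewrite card_imset // card_ord.
have -> : [set f i | i : 'I_k.+1] :|: Q = star_set p P Q.
  by rewrite (imset_lift f ord_max) /star_set setUA.
rewrite (half_sum_star pP pQ dPQ cP cQ) mulr_sumr big_imset /=; last first.
  by move=> a b _ _; exact: gi.
rewrite (delta_expand fi gi fg); apply: eq_bigr => j _.
pose g' := fun b => g (lift j b).
have g'i : injective g' by move=> a b /gi /lift_inj.
rewrite (star_setD pP pQ dPQ (imset_f _ _)) // /Q (imset_liftD1 j gi).
rewrite (IH f' g' f'i g'i (fun a b => fg _ _)) (star_weight_imset j fi gi).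
have wfg : w p (g j) != 0 by apply: wnz; apply: fg.
have Pf := prod_lift_neq0 ord_max fi; have Pg := prod_lift_neq0 j gi.
rewrite binS bin1 exprD /=.
by field; rewrite Pg Pf wfg !signr_eq0.
Qed.

End AlternatingForm.

Theorem mainTheorem1 (C : numClosedFieldType) (X : Type)
    (phi1 phi2 : X -> X -> C) (m : nat) (hm : (1 <= m)%N)
    (h1a : antisym phi1) (h1p : plucker3 phi1)
    (h2a : antisym phi2) (h2p : plucker3 phi2)
    (x : 'I_(m + m) -> X)
    (hx : forall i j : 'I_(m + m), i != j -> phi2 (x i) (x j) != 0)
    (s : 'S_(m + m)) :
  Delta phi1 phi2 (fun i => x (s i)) = Delta phi1 phi2 x.
Proof.
pose w i j := phi2 (x i) (x j).
have wA i j : w i j = - w j i by exact: h2a.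
have w0 i : w i i = 0 by exact: antisym_diag0.
have [c [d phi1E]] := plucker_rank2 (fun i j k l => h1p (x i) (x j) (x k) (x l)).
have Delta_h (h : 'I_(m + m) -> 'I_(m + m)) : injective h ->
    Delta phi1 phi2 (fun i => x (h i)) =
    (-1) ^+ 'C(m, 2) * half_sum w c d setT.
  move=> hi; transitivity
    (delta w c d (fun i => h (lshift m i)) (fun i => h (rshift m i))).
    by rewrite /Delta /delta /vdm; congr (\det _ / _); apply/matrixP => i j;
      rewrite !mxE phi1E.
  rewrite (delta_half_sum wA w0 (fun i j k l => h2p (x i) (x j) (x k) (x l)) (fun i j => hx i j)).
  - by rewrite imset_split imset_inj_setT.
  - by move=> a b /hi /lshift_inj.
  - by move=> a b /hi /rshift_inj.
  - by move=> a b; apply/eqP => /hi /eqP; rewrite eq_lrshift.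
by rewrite (Delta_h s (@perm_inj _ s)); symmetry; exact: (Delta_h id (@inj_id _)).
Qed.
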